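(* Let $L$ be a positive integer, $S\ge 2$ an integer with $2^S\mid L$, and let $\{a_i(k)\}_{i\in\mathbb Z_L}$, $k\in\mathcal K=\mathbb Z_L$, be binary sequences (indexed by one period) satisfying: for every $s$ distinct keys $k_1,\ldots,k_S\in\mathcal K$ and all $b_1,\ldots,b_S\in\{0,1\}$, $$|A_{b_1\ldots b_S}(k_1,\ldots,k_S)|=L/2^S.$$ Let $0<\gamma<1$ with $\gamma L$ an integer, and let $2\le s\le S$. Let $r$ be the integer with $P_s(r)\le\gamma/2<P_s(r+1)$. Then for every set $T\subset\mathbb Z_L$ with $|T|=\gamma L$ and every guessing function $g:T\to\{0,1\}$, and for every $s$ distinct keys $k_1,\ldots,k_s\in\mathcal K$, $$\min_{1\le i\le s}\bigl|\{j\in T: g(j)=a_j(k_i)\}\bigr|\le n_{\rm correct}(\gamma):=L\Bigl\{P_{s-1}(r)+\frac{s-r-1}{s}\bigl(\gamma-2P_s(r)\bigr)\Bigr\}.$$ Equivalently, for every such $T$ and $g$, fewer than $s$ keys $k\in\mathcal K$ satisfy $|\{j\in T: g(j)=a_j(k)\}|>n_{\rm correct}(\gamma)$; in particular, if the key is uniformly distributed on $\mathcal K$, the number of correctly guessed bits does not exceed $n_{\rm correct}(\gamma)$ with probability at least $1-s/|\mathcal K|$.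
   Context: $\mathbb Z_L=\{0,\ldots,L-1\}$ is the residue ring modulo $L$. For distinct keys $k_1,\ldots,k_s$ and bits $b_1,\ldots,b_s$, $A_{b_1\ldots b_s}(k_1,\ldots,k_s)=\{i\in\mathbb Z_L: a_i(k_1)=b_1,\ldots,a_i(k_s)=b_s\}$. For integers $s\ge1$ and $t$, $P_s(t)=\Pr[X_s\le t]=2^{-s}\sum_{u=0}^{t}\binom{s}{u}$, where $X_s$ is binomial with $s$ trials and success probability $1/2$ (so $P_s(t)=0$ for $t<0$). *)

From HB Require Import structures.
From mathcomp Require Import all_boot all_order all_algebra.
Set Implicit Arguments. Unset Strict Implicit. Unset Printing Implicit Defensive.
Import Order.TTheory GRing.Theory Num.Theory.
Local Open Scope ring_scope.

(* The binary sequences: a k i = a_i(k), key k in Z_L, position i in Z_L. *)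

Definition Aset (L s : nat) (a : 'I_L -> 'I_L -> bool)
  (k : 'I_s -> 'I_L) (b : 'I_s -> bool) : {set 'I_L} :=
  [set i : 'I_L | [forall t : 'I_s, a (k t) i == b t]].

Definition Pbin (s : nat) (t : int) : rat :=
  match t with
  | Posz n => (2%:R ^+ s)^-1 * \sum_(0 <= u < n.+1) ('C(s, u))%:R
  | Negz _ => 0
  end.

Definition ncorrect (L s : nat) (r : int) (gamma : rat) : rat :=
  L%:R * (Pbin s.-1 r
          + ((s%:Z - r - 1)%:~R / s%:R) * (gamma - 2%:R * Pbin s r)).

From mathcomp Require Import all_boot all_order all_algebra zify ring lra.
Import Order.TTheory GRing.Theory Num.Theory.

(* Count agreements position by position. If the keys k_1..k_s take value 1 at
   position j for exactly w of them, then g(j) agrees with w or with s - w keys,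
   and for every n >= 0 either count is at most
     s - (n+1) + (n+1 - w)^+ + (n+1 - (s - w))^+.
   Summing over T, and then over all of Z_L, the balance property (which descends
   from S keys to any s <= S keys by adding a fresh key) makes each of the 2^s
   patterns occur L/2^s times, so the total number of agreements is at most
     |T| (s - n - 1) + 2 L/2^s sum_w C(s,w) (n+1 - w)^+.
   The minimum over the keys is at most 1/s of this, and the identity
     s sum_{u<=n} C(s-1,u) = (s-n-1) sum_{u<=n} C(s,u) + sum_w C(s,w) (n+1-w)^+
   turns the bound into n_correct with r = n. For r < 0 the trivial bound |T|
   suffices. *)

Definition extend_ord {X : Type} {m} (f : 'I_m -> X) (x : X) : 'I_m.+1 -> X :=
  fun t => if unlift ord_max t is Some t' then f t' else x.

Lemma extend_ord_inj {X : eqType} {m} {f : 'I_m -> X} {x} :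
  injective f -> x \notin codom f -> injective (extend_ord f x).
Proof.
move=> f_inj fx t1 t2; rewrite /extend_ord.
case: unliftP => [t1'|] ->; case: unliftP => [t2'|] -> //.
- by move/f_inj ->.
- by move=> E; move: fx; rewrite -E codom_f.
- by move=> E; move: fx; rewrite E codom_f.
Qed.

Section Balance.
Context {L : nat} (a : 'I_L -> 'I_L -> bool).

Definition balanced n :=
  forall (k : 'I_n -> 'I_L) b, injective k -> (#|Aset a k b| * 2 ^ n)%N = L.

Lemma Aset_extend m (k : 'I_m -> 'I_L) (b : 'I_m -> bool) x c :
  Aset a (extend_ord k x) (extend_ord b c) = Aset a k b :&: [set j | a x j == c].
Proof.
apply/setP => j; rewrite !inE /extend_ord.
apply/forallP/andP => [H|[/forallP H1 H2] t].
  split; last by have := H ord_max; rewrite unlift_none.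
  by apply/forallP => t; have := H (lift ord_max t); rewrite liftK.
by case: unliftP.
Qed.

Lemma card_Aset_extend m (k : 'I_m -> 'I_L) (b : 'I_m -> bool) x :
  #|Aset a k b| =
  (#|Aset a (extend_ord k x) (extend_ord b true)|
   + #|Aset a (extend_ord k x) (extend_ord b false)|)%N.
Proof.
rewrite !Aset_extend -(cardsID [set j | a x j == true] (Aset a k b)); congr (_ + _)%N.
by apply: eq_card => j; rewrite !inE; case: (a x j); rewrite ?andbT ?andbF.
Qed.

Lemma exists_fresh_key {m} {k : 'I_m -> 'I_L} :
  injective k -> (m < L)%N -> exists x, x \notin codom k.
Proof.
move=> k_inj mL; have : ~~ ([set: 'I_L] \subset [set x in codom k]).
  by apply/negP => /subset_leq_card; rewrite cardsT cardsE card_codom // !card_ord; lia.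
by case/subsetPn => x _; rewrite inE; exists x.
Qed.

Lemma balanced_pred m : (m < L)%N -> balanced m.+1 -> balanced m.
Proof.
move=> mL bal k b k_inj; have [x fresh] := exists_fresh_key k_inj mL.
have bal_ext c := bal _ (extend_ord b c) (extend_ord_inj k_inj fresh).
move: (bal_ext true) (bal_ext false); rewrite (card_Aset_extend _ k b x) expnS.
by set n1 := #|_|; set n2 := #|_|; set p := 2 ^ m; nia.
Qed.

Lemma balanced_le {n m} : (m <= n)%N -> (n <= L)%N -> balanced n -> balanced m.
Proof.
elim: n => [|n IH] mn nL bal; first by move: mn; rewrite leqn0 => /eqP ->.
case: (ltngtP m n.+1) mn => // [mn _|-> //].
by apply: IH => //; [lia | apply: balanced_pred].
Qed.

End Balance.

Lemma sum_card_exchange (I J : finType) (A : {set J}) (R : I -> J -> bool) :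
  (\sum_(i : I) #|[set j in A | R i j]| = \sum_(j in A) #|[set i | R i j]|)%N.
Proof.
under eq_bigr do rewrite -sum1dep_card.
rewrite (exchange_big_dep (fun j => j \in A)) => [|i j _ /andP[] //].
apply: eq_bigr => j jA; rewrite -sum1dep_card.
by apply: eq_bigl => i; rewrite jA.
Qed.

Lemma sum_set_card s (phi : nat -> nat) :
  (\sum_(B : {set 'I_s}) phi #|B| = \sum_(0 <= w < s.+1) 'C(s, w) * phi w)%N.
Proof.
have card_le (B : {set 'I_s}) : (#|B| < s.+1)%N.
  by rewrite ltnS -[X in (_ <= X)%N](card_ord s) max_card.
rewrite (partition_big (fun B : {set 'I_s} => inord #|B| : 'I_s.+1) predT) //=.
rewrite big_mkord; apply: eq_bigr => w _.
rewrite (eq_bigr (fun _ => phi w)) => [|B /eqP <-]; last by rewrite inordK.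
have -> : 'C(s, w) = #|[set A : {set 'I_s} | #|A| == w]| by rewrite card_draws card_ord.
rewrite sum_nat_const; congr (_ * _)%N.
by apply: eq_card => B; rewrite !inE unfold_in /= inordK.
Qed.

Lemma card_agree_le s n (B : {set 'I_s}) (b : bool) :
  (#|[set t | b == (t \in B)]| + n.+1 <= s + ((n.+1 - #|B|) + (n.+1 - #|~: B|)))%N.
Proof.
have := cardsC B; rewrite card_ord.
have -> : #|[set t | b == (t \in B)]| = if b then #|B| else #|~: B|.
  by case: b; apply: eq_card => t; rewrite !inE; case: (t \in B).
by case: b; lia.
Qed.

(* [shortfall s n] is 2^s E[(n+1 - X_s)^+]; truncated subtraction is the positive part. *)
Definition shortfall s n := (\sum_(0 <= w < s.+1) 'C(s, w) * (n.+1 - w))%N.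

Lemma shortfall_prefix s n :
  shortfall s n = (\sum_(0 <= u < n.+1) 'C(s, u) * (n.+1 - u))%N.
Proof.
pose F u := ('C(s, u) * (n.+1 - u))%N.
have drop_tail m : (m <= (s + n).+1)%N -> (forall u, m <= u -> F u = 0)%N ->
    (\sum_(0 <= u < (s + n).+1) F u = \sum_(0 <= u < m) F u)%N.
  move=> mN F0; rewrite (big_cat_nat (leq0n m) mN) /= [X in (_ + X)%N]big_nat_cond.
  rewrite [X in (_ + X)%N]big1 ?addn0 //.
  by move=> u /andP [/andP [mu _] _]; apply: F0.
rewrite /shortfall -drop_tail ?ltnS ?leq_addr // => [|u su]; last by rewrite /F bin_small.
rewrite -drop_tail ?ltnS ?leq_addl // => u nu.
by rewrite /F (_ : n.+1 - u = 0)%N ?muln0 //; lia.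
Qed.

Section Counting.
Context {L s : nat} {a : 'I_L -> 'I_L -> bool} {k : 'I_s -> 'I_L}.
Hypothesis k_balanced : forall b, (#|Aset a k b| * 2 ^ s)%N = L.

Let pattern j := [set t | a (k t) j].

Lemma sum_pattern (phi : {set 'I_s} -> nat) :
  (2 ^ s * \sum_j phi (pattern j) = L * \sum_(B : {set 'I_s}) phi B)%N.
Proof.
have card_pattern B : (#|[pred j | pattern j == B]| * 2 ^ s)%N = L.
  rewrite -[RHS](k_balanced (fun t => t \in B)); congr (_ * _)%N; apply: eq_card => j.
  rewrite [in RHS]inE -[LHS]/(pattern j == B).
  apply/eqP/forallP => [<- t|pat]; first by rewrite inE.
  by apply/setP => t; rewrite inE; apply/eqP/pat.
rewrite (partition_big pattern predT) // !big_distrr; apply: eq_bigr => B _.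
rewrite (eq_bigr (fun _ => phi B)) => [|j /eqP <- //].
by rewrite sum_nat_const -[L in RHS](card_pattern B) /= mulnA [(2 ^ s * _)%N]mulnC.
Qed.

Lemma sum_pattern_shortfall n :
  (2 ^ s * \sum_j ((n.+1 - #|pattern j|) + (n.+1 - #|~: pattern j|))
   = L * (2 * shortfall s n))%N.
Proof.
rewrite big_split mulnDr (sum_pattern (fun B => n.+1 - #|~: B|)%N).
rewrite (reindex_inj (@setC_inj _)) /= (sum_pattern (fun B => n.+1 - #|B|)%N).
under eq_bigr do rewrite setCK.
by rewrite -mulnDr addnn -mul2n (sum_set_card _ (fun w => n.+1 - w)%N).
Qed.

Lemma sum_agree_le (T : {set 'I_L}) (g : 'I_L -> bool) n :
  (2 ^ s * (\sum_(i < s) #|[set j in T | g j == a (k i) j]| + #|T| * n.+1)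
   <= 2 ^ s * (#|T| * s) + L * (2 * shortfall s n))%N.
Proof.
rewrite -sum_pattern_shortfall -mulnDr leq_mul2l; apply/orP; right.
pose F j := ((n.+1 - #|pattern j|) + (n.+1 - #|~: pattern j|))%N.
have agree_le j : (#|[set i | g j == a (k i) j]| + n.+1 <= s + F j)%N.
  rewrite (_ : [set i | _] = [set t | g j == (t \in pattern j)]).
    exact: card_agree_le.
  by apply/setP => t; rewrite !inE.
rewrite sum_card_exchange -sum_nat_const -big_split /=.
apply: leq_trans (_ : \sum_(j in T) (s + F j) <= _)%N.
  exact: leq_sum.
rewrite big_split sum_nat_const mulnC leq_add2l.
by rewrite [X in (_ <= X)%N](bigID (mem T)) leq_addr.
Qed.

End Counting.

Local Open Scope ring_scope.

Lemma sum_binom_pred_mul (R : comPzRingType) s n :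
  s%:R * \sum_(0 <= u < n.+1) ('C(s.-1, u))%:R =
  (s%:R - n.+1%:R) * \sum_(0 <= u < n.+1) ('C(s, u))%:R + (shortfall s n)%:R :> R.
Proof.
rewrite shortfall_prefix natr_sum mulr_sumr mulr_sumr -big_split /=.
apply: eq_big_nat => u /andP [_ un].
rewrite -natrM mul_bin_down natrM.
case: (leqP u s) => us; last by rewrite bin_small // ?(mulr0, mul0r, mul0n, muln0, addr0).
rewrite natrM !natrB //; [ring | lia].
Qed.

Lemma ncorrect_Posz L s n gamma : (0 < s)%N ->
  ncorrect L s (Posz n) gamma * (s%:R * 2%:R ^+ s) =
  gamma * L%:R * (s%:R - n.+1%:R) * 2%:R ^+ s + 2%:R * L%:R * (shortfall s n)%:R.
Proof.
case: s => // s _; rewrite /ncorrect /Pbin /= !intrB /=.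
set D := \sum_(0 <= u < n.+1) _; set A := \sum_(0 <= u < n.+1) _.
have DE : D = ((s.+1%:R - n.+1%:R) * A + (shortfall s.+1 n)%:R) / s.+1%:R.
  by rewrite -sum_binom_pred_mul mulrC mulKf ?pnatr_eq0.
rewrite DE exprS -natr1; field.
by rewrite expf_neq0 // addrC natr1 pnatr_eq0.
Qed.

Lemma ncorrect_Negz_ge L s n gamma : (0 < s)%N -> 0 <= gamma ->
  gamma * L%:R <= ncorrect L s (Negz n) gamma.
Proof.
move=> s_gt0 gamma_ge0; rewrite /ncorrect /Pbin mulr0 subr0 add0r.
have -> : (s%:Z - Negz n - 1)%:~R = (s + n)%N%:R :> rat.
  by rewrite (_ : _ - _ = (s + n)%N :> int) // NegzE; lia.
rewrite natrD mulrDl divff ?pnatr_eq0 -?lt0n // mulrDl mul1r mulrDr mulrC lerDl.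
by rewrite mulr_ge0 // mulr_ge0 // divr_ge0.
Qed.

Theorem theorem1
  (L S : nat) (a : 'I_L -> 'I_L -> bool)
  (HL : (0 < L)%N) (HS : (2 <= S)%N) (Hdiv : (2 ^ S %| L)%N)
  (Hbal : forall (k : 'I_S -> 'I_L) (b : 'I_S -> bool), injective k ->
            (#|Aset a k b| * 2 ^ S)%N = L)
  (gamma : rat) (Hg0 : 0 < gamma) (Hg1 : gamma < 1)
  (HgL : exists m : nat, gamma * L%:R = m%:R)
  (s : nat) (Hs2 : (2 <= s)%N) (HsS : (s <= S)%N)
  (r : int) (Hr1 : Pbin s r <= gamma / 2%:R) (Hr2 : gamma / 2%:R < Pbin s (r + 1))
  (T : {set 'I_L}) (HT : #|T|%:R = gamma * L%:R)
  (g : 'I_L -> bool)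
  (k : 'I_s -> 'I_L) (Hk : injective k) :
  exists i : 'I_s,
    (#|[set j in T | g j == a (k i) j]|)%:R <= ncorrect L s r gamma.
Proof.
have SL : (S <= L)%N by apply: leq_trans (ltnW (ltn_expl _ _)) (dvdn_leq HL Hdiv).
have k_bal b := balanced_le a HsS SL Hbal k b Hk.
have s_gt0 : (0 < s)%N by lia.
pose agree i := #|[set j in T | g j == a (k i) j]|.
have [i0 _ i0_min] := arg_minnP agree (isT : predT (Ordinal s_gt0)).
exists i0; rewrite -/(agree i0).
have min_le_sum : (s * agree i0 <= \sum_(i < s) agree i)%N.
  by rewrite -[X in (X * _)%N](card_ord s) -sum_nat_const leq_sum.
(* The bound holds for every r; Hr1 and Hr2 only single out the best one. *)
case: r Hr1 Hr2 => n _ _.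
- have key : (2 ^ s * (s * agree i0 + #|T| * n.+1)
              <= 2 ^ s * (#|T| * s) + L * (2 * shortfall s n))%N.
    apply: leq_trans (sum_agree_le k_bal T g n).
    by rewrite leq_mul2l leq_add2r min_le_sum orbT.
  move: key; rewrite -(ler_nat rat) !(natrD, natrM, natrX) HT => key.
  have pos : (0 : rat) < s%:R * 2%:R ^+ s by rewrite mulr_gt0 ?exprn_gt0 ?ltr0n.
  rewrite -(ler_pM2r pos) ncorrect_Posz //; nra.
- have agree_le_T : (agree i0)%:R <= #|T|%:R :> rat.
    by rewrite ler_nat subset_leq_card //; apply/subsetP => j; rewrite inE => /andP [].
  by rewrite (le_trans agree_le_T) // HT ncorrect_Negz_ge // ltW.
Qed.
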